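(* Let $G$ be a connected simple graph with at least $2$ vertices and let $v\in V(G)$. Then $$\chi_{dom}(G)-\deg v+1\leq \chi_{dom}(G\odot v)\leq \chi_{dom}(G)+1.$$
   Context: All graphs are finite and simple. A dominated coloring of a graph $H$ is a proper vertex coloring of $H$ such that for every color class $C$ there is a vertex $x\in V(H)$ adjacent to every vertex of $C$. The dominated chromatic number $\chi_{dom}(H)$ is the minimum number of colors in a dominated coloring of $H$. $G\odot v$ denotes the graph obtained from $G$ by removing every edge joining two neighbours of $v$ ($v$ itself and all other edges are kept). $\deg v$ is the degree of $v$ in $G$. *)

From mathcomp Require Import all_boot.
From Stdlib Require Import ClassicalDescription.
Set Implicit Arguments. Unset Strict Implicit. Unset Printing Implicit Defensive.

Section Graph.
Variable T : finType.

Definition simple_graph (e : rel T) : Prop :=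
  symmetric e /\ irreflexive e.

Definition connected_graph (e : rel T) : Prop :=
  forall x y : T, connect e x y.

Definition deg (e : rel T) (v : T) : nat := #|[set u | e v u]|.

Definition odot (e : rel T) (v : T) : rel T :=
  [rel x y | e x y && ~~ (e v x && e v y)].

Definition dominated_coloring (e : rel T) (k : nat) (c : T -> 'I_k) : bool :=
  [forall x, forall y, e x y ==> (c x != c y)] &&
  [forall i : 'I_k, exists x : T, forall y : T, (c y == i) ==> e x y].

Definition has_dom_coloring (e : rel T) (k : nat) : bool :=
  [exists c : {ffun T -> 'I_k}, dominated_coloring e c].

(* chi_dom: least k admitting a dominated coloring with k colors
   (0 if none exists, which never happens in the theorem's setting) *)
Definition chi_dom (e : rel T) : nat :=
  match excluded_middle_informative (exists k, has_dom_coloring e k) with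
  | left H => ex_minn H
  | right _ => 0
  end.
End Graph.

(* Take an optimal dominated colouring of one graph and modify it on the
   neighbourhood N(v) of v.  Going from G to G ⊙ v, N(v) becomes independent and
   is dominated by v, so giving it one fresh colour costs one colour.  Going back,
   N(v) may contain edges again, so all but one vertex of N(v) get pairwise
   distinct fresh colours; these singleton classes are dominated by v, and the
   remaining classes only shrink, costing deg v - 1 colours. *)

From mathcomp Require Import all_boot.
From mathcomp Require Import zify.
From Stdlib Require Import ClassicalDescription.
Set Implicit Arguments. Unset Strict Implicit. Unset Printing Implicit Defensive.

Section DominatedColorings.
Variable T : finType.
Implicit Types (e : rel T) (k : nat).

(* Colourings with natural-number colours; only classes of actual vertices need
   a dominating vertex, since empty classes are dominated by any vertex. *)
Definition nat_dom_coloring e k (f : T -> nat) : Prop :=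
  [/\ forall y, f y < k,
      forall x y, e x y -> f x != f y &
      forall y0, exists x, forall y, f y = f y0 -> e x y].

Lemma has_dom_coloringP e k (x0 : T) :
  reflect (exists f, nat_dom_coloring e k f) (has_dom_coloring e k).
Proof.
apply: (iffP idP).
  move=> /existsP [c /andP [/forallP proper_c /forallP dom_c]].
  exists (fun y => val (c y)); split=> [y | x y exy | y0]; first exact: ltn_ord.
    by have /forallP/(_ y)/implyP/(_ exy) := proper_c x.
  have /existsP [x /forallP dom_x] := dom_c (c y0).
  by exists x => y /val_inj cy; apply: (implyP (dom_x y)); rewrite cy.
move=> [f [f_lt proper_f dom_f]].
apply/existsP; exists (finfun (fun y => Ordinal (f_lt y))); apply/andP; split.
  apply/forallP => x; apply/forallP => y; apply/implyP => exy.
  by rewrite !ffunE -val_eqE proper_f.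
apply/forallP => i; case: (pickP (fun y => f y == i)) => [y0 /eqP fy0 | no_y].
  have [x dom_x] := dom_f y0; apply/existsP; exists x; apply/forallP => y.
  by apply/implyP; rewrite ffunE -val_eqE /= => /eqP fy; apply: dom_x; rewrite fy.
apply/existsP; exists x0; apply/forallP => y; apply/implyP.
by rewrite ffunE -val_eqE /= no_y.
Qed.

Lemma chi_dom_leq e k : has_dom_coloring e k -> chi_dom e <= k.
Proof.
rewrite /chi_dom => ek; case: excluded_middle_informative => [ex | //].
by case: ex_minnP => m _; apply.
Qed.

Lemma has_dom_coloring_chi_dom e k :
  has_dom_coloring e k -> has_dom_coloring e (chi_dom e).
Proof.
rewrite /chi_dom => ek; case: excluded_middle_informative => [ex | []].
  by case: ex_minnP.
by exists k.
Qed.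

Lemma connected_neighbor e :
  connected_graph e -> 1 < #|T| -> forall x, exists y, e x y.
Proof.
move=> conn_e T_gt1 x.
have [z z_neq_x | all_x] := pickP (predC1 x).
  case/connectP: (conn_e x z) => -[/= _ zx | y p /= /andP [exy _] _].
    by rewrite /= zx eqxx in z_neq_x.
  by exists y.
move: T_gt1; rewrite ltnNge -(card1 x) => /negP []; apply: subset_leq_card.
by apply/subsetP => z _; move/negbFE: (all_x z); rewrite inE.
Qed.

Lemma deg_gt0 e x : (exists y, e x y) -> 0 < deg e x.
Proof. by move=> [y exy]; apply/card_gt0P; exists y; rewrite inE. Qed.

Lemma has_dom_coloring_card e (x0 : T) :
  symmetric e -> irreflexive e -> (forall x, exists y, e x y) ->
  has_dom_coloring e #|T|.
Proof.
move=> sym_e irr_e nbr_e; apply/(has_dom_coloringP _ _ x0).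
exists (fun y => val (enum_rank y)); split=> [y | x y exy | y0].
- exact: ltn_ord.
- by rewrite val_eqE; apply: contraTneq exy => /enum_rank_inj ->; rewrite irr_e.
- have [x ey0x] := nbr_e y0; exists x => y /val_inj /enum_rank_inj ->.
  by rewrite sym_e.
Qed.

Lemma odot_dom_coloring e v k :
  irreflexive e -> has_dom_coloring e k -> has_dom_coloring (odot e v) k.+1.
Proof.
move=> irr_e /(has_dom_coloringP _ _ v) [c [c_lt proper_c dom_c]].
apply/(has_dom_coloringP _ _ v).
exists (fun y => if e v y then k else c y); split=> [y | x y | y0].
- by case: (e v y) => //; exact: ltnW (c_lt y).
- rewrite /odot /= => /andP [exy]; case: (e v x); case: (e v y) => //= _.
  + by rewrite neq_ltn c_lt orbT.
  + by rewrite neq_ltn c_lt.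
  + exact: proper_c.
- case ev_y0: (e v y0).
    exists v => y; case ev_y: (e v y) => cy.
      by rewrite /odot /= ev_y irr_e.
    by have := c_lt y; rewrite cy ltnn.
  have [x dom_x] := dom_c y0; exists x => y.
  case ev_y: (e v y) => cy.
    by have := c_lt y0; rewrite -cy ltnn.
  by rewrite /odot /= dom_x // ev_y andbF.
Qed.

Lemma dom_coloring_of_odot e v m :
  irreflexive e -> has_dom_coloring (odot e v) m ->
  has_dom_coloring e (m + (deg e v).-1).
Proof.
move=> irr_e /(has_dom_coloringP _ _ v) [c [c_lt proper_c dom_c]].
apply/(has_dom_coloringP _ _ v).
pose s := enum [set u | e v u].
have mem_s y : (y \in s) = e v y by rewrite mem_enum inE.
have index_lt y : e v y -> index y s < deg e v.
  by rewrite -mem_s -index_mem /deg cardE.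
have eq_index x y : e v x -> e v y -> index x s = index y s -> x = y.
  by rewrite -!mem_s; apply: index_inj.
(* the neighbour of v listed first in s keeps its colour *)
pose fresh y := e v y && (0 < index y s).
have neq_edge x y : e x y -> x != y.
  by move=> exy; apply: contraTneq exy => ->; rewrite irr_e.
exists (fun y => if fresh y then m + (index y s).-1 else c y).
split=> [y | x y exy | y0].
- case: ifP => [/andP [/index_lt] | _]; [lia | have := c_lt y; lia].
- have := c_lt x; have := c_lt y.
  case fx: (fresh x); case fy: (fresh y) => cy cx; last first.
  + apply: proper_c; rewrite /odot /= exy; apply: contraTN (neq_edge _ _ exy).
    move: fx fy; rewrite /fresh => /negbT fx /negbT fy /andP [vx vy].
    rewrite vx vy -!leqNgt !leqn0 in fx fy.
    by rewrite negbK (eq_index x y) // (eqP fx) (eqP fy).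
  + lia.
  + lia.
  + apply: contraNneq (neq_edge _ _ exy) => col_xy; apply/eqP.
    move: fx fy => /andP [vx ix] /andP [vy iy]; apply: eq_index => //; lia.
- case fy0: (fresh y0).
    exists v => y; have := c_lt y; case fy: (fresh y) => cy col_y; last lia.
    by case/andP: fy.
  have [x dom_x] := dom_c y0; exists x => y.
  have := c_lt y0; case: (fresh y) => cy0 col_y; first lia.
  by case/andP: (dom_x y col_y).
Qed.

End DominatedColorings.

Theorem theorem3p6 (T : finType) (e : rel T) (v : T) :
  simple_graph e -> connected_graph e -> 1 < #|T| ->
  chi_dom e + 1 <= chi_dom (odot e v) + deg e v /\
  chi_dom (odot e v) <= chi_dom e + 1.
Proof.
move=> [sym_e irr_e] conn_e T_gt1.
have nbr_e := connected_neighbor conn_e T_gt1.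
have e_opt := has_dom_coloring_chi_dom (has_dom_coloring_card v sym_e irr_e nbr_e).
have odot_col := odot_dom_coloring v irr_e e_opt.
have upper := chi_dom_leq odot_col.
have lower := chi_dom_leq (dom_coloring_of_odot irr_e (has_dom_coloring_chi_dom odot_col)).
have := deg_gt0 (nbr_e v); lia.
Qed.
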